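(* Let $t$ be a term of the silly substitution calculus. If there is a derivation $\pi\triangleright\Gamma\vdash^{(m,e)} t : L$ in the silly multi type system, then $t$ is strongly $\to_w$-normalizing. Moreover, if $d: t\to_w^* n$ is a reduction sequence to a $\to_w$-normal term $n$, then the number of $\to_{wm}$ steps in $d$ is at most $m$ and the number of $\to_{we}$ steps in $d$ is at most $e$.
   Context: Terms: $t ::= x \mid \lambda x.t \mid t\,u \mid t[x\backslash u]$ ($t[x\backslash u]$ an explicit substitution binding $x$ in $t$; terms up to $\alpha$). Values $v ::= \lambda x.t$. Substitution contexts $S ::= \langle\cdot\rangle\mid S[x\backslash u]$. Weak contexts $W ::= \langle\cdot\rangle \mid W\,t \mid t\,W \mid t[x\backslash W] \mid W[x\backslash u]$; $W\langle\langle t\rangle\rangle$ is plugging without capture of free variables of $t$. Root rules: $S\langle\lambda x.t\rangle u\mapsto_m S\langle t[x\backslash u]\rangle$; $W\langle\langle x\rangle\rangle[x\backslash u]\mapsto_e W\langle\langle u\rangle\rangle[x\backslash u]$; $t[x\backslash S\langle v\rangle]\mapsto_{gcv} S\langle t\rangle$ if $x\notin\mathrm{fv}(t)$. $\to_{wm},\to_{we},\to_{wgcv}$ are their closures under weak contexts, $\to_w$ their union. Strongly normalizing: no infinite reduction sequence. Silly multi types: linear types $L ::= \mathtt{n} \mid M\multimap L$; multi types $M ::= [L_i]_{i\in I}$ finite multisets ($\mathbf{0}$ empty, $\uplus$ sum). Type contexts $\Gamma$ map variables to multi types with finite support; $\uplus$ pointwise; $\Gamma\setminus\!\!\setminus x$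 sets $x$ to $\mathbf{0}$. Rules: (ax) $x:[L]\vdash^{(0,1)} x:L$; (many) from $(\Gamma_i\vdash^{(m_i,e_i)} t : L_i)_{i\in I}$, $I$ finite possibly empty, infer $\uplus_i\Gamma_i\vdash^{(\sum m_i,\sum e_i)} t : [L_i]_{i\in I}$; ($\mathrm{ax}_\lambda$) $\vdash^{(0,0)}\lambda x.t:\mathtt{n}$; ($\lambda$) from $\Gamma\vdash^{(m,e)}t:L$ infer $\Gamma\setminus\!\!\setminus x\vdash^{(m,e)}\lambda x.t:\Gamma(x)\multimap L$; (@) from $\Gamma\vdash^{(m,e)} t : M\multimap L$ and $\Delta\vdash^{(m',e')} u : M\uplus[\mathtt{n}]$ infer $\Gamma\uplus\Delta\vdash^{(m+m'+1,e+e')} tu : L$; (ES) from $\Gamma\vdash^{(m,e)} t:L$ and $\Delta\vdash^{(m',e')}u:\Gamma(x)\uplus[\mathtt{n}]$ infer $(\Gamma\setminus\!\!\setminus x)\uplus\Delta\vdash^{(m+m',e+e')} t[x\backslash u]:L$. *)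

(* Silly substitution calculus (weak reduction) and silly multi types.
   Terms up to alpha are represented with de Bruijn indices. *)
From Stdlib Require Import List Arith.
Import ListNotations.

(* Var n | Lam t (binds index 0 in t) | App t u | ES t u  = t[x\u] (binds index 0 in t) *)
Inductive tm : Type :=
| Var : nat -> tm
| Lam : tm -> tm
| App : tm -> tm -> tm
| ES  : tm -> tm -> tm.

Fixpoint lift (k c : nat) (t : tm) : tm :=
  match t with
  | Var n => if c <=? n then Var (n + k) else Var n
  | Lam t1 => Lam (lift k (S c) t1)
  | App t1 t2 => App (lift k c t1) (lift k c t2)
  | ES t1 t2 => ES (lift k (S c) t1) (lift k c t2)
  end.

Inductive sctx : Type :=
| SHole : sctx
| SES : sctx -> tm -> sctx.       (* SES S u  =  S[x\u] *)

Fixpoint fillS (s : sctx) (t : tm) : tm :=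
  match s with
  | SHole => t
  | SES s' u => ES (fillS s' t) u
  end.

Fixpoint depthS (s : sctx) : nat :=
  match s with
  | SHole => 0
  | SES s' _ => Datatypes.S (depthS s')
  end.

Inductive wctx : Type :=
| WHole : wctx
| WAppL : wctx -> tm -> wctx
| WAppR : tm -> wctx -> wctx
| WESArg : tm -> wctx -> wctx     (* t[x\W]  *)
| WESBody : wctx -> tm -> wctx.   (* W[x\u]  *)

(* ordinary plugging W<t> (t lives in the scope of the hole: capture allowed) *)
Fixpoint fillW (W : wctx) (t : tm) : tm :=
  match W with
  | WHole => t
  | WAppL W' u => App (fillW W' t) u
  | WAppR u W' => App u (fillW W' t)
  | WESArg u W' => ES u (fillW W' t)
  | WESBody W' u => ES (fillW W' t) u
  end.

Fixpoint depthW (W : wctx) : nat :=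
  match W with
  | WHole => 0
  | WAppL W' _ => depthW W'
  | WAppR _ W' => depthW W'
  | WESArg _ W' => depthW W'
  | WESBody W' _ => Datatypes.S (depthW W')
  end.

(* capture-avoiding plugging W<<t>> (t lives in the scope outside W) *)
Definition fillWc (W : wctx) (t : tm) : tm := fillW W (lift (depthW W) 0 t).

Inductive kind : Type := Km | Ke | Kgcv.

Inductive root : kind -> tm -> tm -> Prop :=
(* S<\x.t> u  |->m  S<t[x\u]> *)
| root_m : forall (s : sctx) t u,
    root Km (App (fillS s (Lam t)) u) (fillS s (ES t (lift (depthS s) 0 u)))
(* W<<x>>[x\u]  |->e  W<<u>>[x\u] *)
| root_e : forall W u,
    root Ke (ES (fillWc W (Var 0)) u) (ES (fillWc W (lift 1 0 u)) u)
(* t[x\S<v>]  |->gcv  S<t>   if x not free in t  (i.e. t is the lift of some t0) *)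
| root_gcv : forall (s : sctx) t0 v,
    root Kgcv (ES (lift 1 0 t0) (fillS s (Lam v))) (fillS s (lift (depthS s) 0 t0)).

Definition wstep (k : kind) (t t' : tm) : Prop :=
  exists W r r', root k r r' /\ t = fillW W r /\ t' = fillW W r'.

Definition wred (t t' : tm) : Prop := exists k, wstep k t t'.

Definition wnormal (t : tm) : Prop := forall t', ~ wred t t'.

Definition wSN (t : tm) : Prop :=
  ~ exists f : nat -> tm, f 0 = t /\ forall i, wred (f i) (f (S i)).

Inductive redseq : tm -> list kind -> tm -> Prop :=
| rs_refl : forall t, redseq t [] t
| rs_step : forall k t t' ks u, wstep k t t' -> redseq t' ks u -> redseq t (k :: ks) u.

Definition kind_eqb (k1 k2 : kind) : bool :=
  match k1, k2 with
  | Km, Km | Ke, Ke | Kgcv, Kgcv => true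
  | _, _ => false
  end.

Definition count_kind (k : kind) (ks : list kind) : nat :=
  length (filter (kind_eqb k) ks).

(* linear types L ::= n | M -o L ; multi types M = finite multisets, represented as lists *)
Inductive ltype : Type :=
| Tn : ltype
| Arr : list ltype -> ltype -> ltype.

Definition mtype := list ltype.

(* equality of linear / multi types (multisets compared up to reordering, deeply) *)
Inductive ltype_eq : ltype -> ltype -> Prop :=
| leq_n : ltype_eq Tn Tn
| leq_arr : forall M M' L L', mtype_eq M M' -> ltype_eq L L' -> ltype_eq (Arr M L) (Arr M' L')
with mtype_eq : mtype -> mtype -> Prop :=
| meq_nil : mtype_eq [] []
| meq_cons : forall a b l1 l2a l2b,
    ltype_eq a b -> mtype_eq l1 (l2a ++ l2b) -> mtype_eq (a :: l1) (l2a ++ b :: l2b).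

Definition ctx := nat -> mtype.
Definition ctx_empty : ctx := fun _ => [].
Definition ctx_union (G D : ctx) : ctx := fun x => G x ++ D x.
Definition ctx_single (x : nat) (L : ltype) : ctx :=
  fun y => if y =? x then [L] else [].
(* the context outside a binder for index 0:  (G \\ x) seen from outside the binder *)
Definition ctx_tail (G : ctx) : ctx := fun y => G (S y).

(* typed G t L m e  :  G |-^(m,e) t : L ;  mtyped G t M m e : G |-^(m,e) t : M *)
Inductive typed : ctx -> tm -> ltype -> nat -> nat -> Prop :=
| ty_ax : forall x L, typed (ctx_single x L) (Var x) L 0 1
| ty_axlam : forall t, typed ctx_empty (Lam t) Tn 0 0
| ty_lam : forall G t L m e,
    typed G t L m e -> typed (ctx_tail G) (Lam t) (Arr (G 0) L) m e
| ty_app : forall G D t u M L M' m e m' e',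
    typed G t (Arr M L) m e -> mtyped D u M' m' e' -> mtype_eq (M ++ [Tn]) M' ->
    typed (ctx_union G D) (App t u) L (m + m' + 1) (e + e')
| ty_es : forall G D t u L M' m e m' e',
    typed G t L m e -> mtyped D u M' m' e' -> mtype_eq (G 0 ++ [Tn]) M' ->
    typed (ctx_union (ctx_tail G) D) (ES t u) L (m + m') (e + e')
with mtyped : ctx -> tm -> mtype -> nat -> nat -> Prop :=
| ty_many_nil : forall t, mtyped ctx_empty t [] 0 0
| ty_many_cons : forall G D t L M m e m' e',
    typed G t L m e -> mtyped D t M m' e' ->
    mtyped (ctx_union G D) t (L :: M) (m + m') (e + e').

(* We refine the type system by a third counter s, the size of the derivation,
   and close it under equivalence of contexts and types (multi types are lists,
   identified up to permutation at every depth).  Subject reduction then holds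
   quantitatively: a ->w step turns a derivation with counters (m, e, s) into
   one for the reduct, of the same type, with s strictly smaller and m, e not
   larger; an m-step trades an application rule and a lambda rule for an ES
   rule, so m drops, and an e-step discards the non-empty set of axioms typing
   the substituted occurrence, so e drops.  Steps under weak contexts are seen
   by the derivation because of the extra [n] in the application and ES rules:
   arguments always receive a non-empty multi type.  Strong normalisation
   follows by well-founded induction on s, and the number of m- and e-steps of
   any reduction sequence is bounded by m and e. *)

From Stdlib Require Import List Arith Lia Permutation Morphisms.
Import ListNotations.

(* A presentation of the equality of types through [Forall2] and [Permutation],
   where transitivity is easy; [ltype_mtype_eq_eqv] shows it contains [ltype_eq]. *)
Inductive ty_eqv : ltype -> ltype -> Prop :=
| ty_eqv_n : ty_eqv Tn Tn
| ty_eqv_arr : forall M M1 M' L L',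
    tys_eqv M M1 -> Permutation M1 M' -> ty_eqv L L' -> ty_eqv (Arr M L) (Arr M' L')
with tys_eqv : list ltype -> list ltype -> Prop :=
| tys_eqv_nil : tys_eqv [] []
| tys_eqv_cons : forall a b l l', ty_eqv a b -> tys_eqv l l' -> tys_eqv (a :: l) (b :: l').

Scheme ty_eqv_mut := Induction for ty_eqv Sort Prop
  with tys_eqv_mut := Induction for tys_eqv Sort Prop.
Combined Scheme ty_tys_eqv_ind from ty_eqv_mut, tys_eqv_mut.

Definition mty_eqv (M M' : mtype) : Prop := exists M1, tys_eqv M M1 /\ Permutation M1 M'.

Lemma tys_eqv_Forall2 l l' : tys_eqv l l' <-> Forall2 ty_eqv l l'.
Proof. split; induction 1; constructor; auto. Qed.

Lemma tys_eqv_perm l1 l2 l3 :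
  Permutation l1 l2 -> tys_eqv l2 l3 -> exists l4, tys_eqv l1 l4 /\ Permutation l4 l3.
Proof.
  intros Hp Hl. apply tys_eqv_Forall2 in Hl.
  destruct (Permutation_Forall2 (Permutation_sym Hp) Hl) as (l4 & Hp4 & Hl4).
  exists l4. split; [apply tys_eqv_Forall2 | apply Permutation_sym]; assumption.
Qed.

Fixpoint ty_eqv_refl (L : ltype) : ty_eqv L L :=
  match L with
  | Tn => ty_eqv_n
  | Arr M L' =>
      let fix tys_eqv_refl (M : list ltype) : tys_eqv M M :=
        match M with
        | [] => tys_eqv_nil
        | a :: M' => tys_eqv_cons _ _ _ _ (ty_eqv_refl a) (tys_eqv_refl M')
        end
      in ty_eqv_arr _ _ _ _ _ (tys_eqv_refl M) (Permutation_refl M) (ty_eqv_refl L')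
  end.

Lemma tys_eqv_refl l : tys_eqv l l.
Proof. induction l; constructor; auto using ty_eqv_refl. Qed.

Lemma ty_tys_eqv_trans :
  (forall a b, ty_eqv a b -> forall c, ty_eqv b c -> ty_eqv a c) /\
  (forall l1 l2, tys_eqv l1 l2 -> forall l3, tys_eqv l2 l3 -> tys_eqv l1 l3).
Proof.
  apply ty_tys_eqv_ind.
  - auto.
  - intros M M1 M' L L' _ IHM Hp _ IHL c Hc. inversion Hc; subst.
    destruct (tys_eqv_perm _ _ _ Hp H1) as (M4 & HM4 & Hp4).
    econstructor; eauto. eapply perm_trans; eauto.
  - auto.
  - intros a b l l' _ IHa _ IHl l3 H. inversion H; subst. constructor; auto.
Qed.

Lemma ty_tys_eqv_sym :
  (forall a b, ty_eqv a b -> ty_eqv b a) /\ (forall l1 l2, tys_eqv l1 l2 -> tys_eqv l2 l1).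
Proof.
  apply ty_tys_eqv_ind; try (constructor; auto).
  intros M M1 M' L L' _ IHM Hp _ IHL.
  destruct (tys_eqv_perm _ _ _ (Permutation_sym Hp) IHM) as (M4 & HM4 & Hp4).
  econstructor; eauto.
Qed.

Lemma ty_eqv_trans a b c : ty_eqv a b -> ty_eqv b c -> ty_eqv a c.
Proof. intros; eapply ty_tys_eqv_trans; eauto. Qed.

Lemma ty_eqv_sym a b : ty_eqv a b -> ty_eqv b a.
Proof. apply ty_tys_eqv_sym. Qed.

#[export] Instance ty_eqv_Equivalence : Equivalence ty_eqv.
Proof. split; [exact ty_eqv_refl | exact ty_eqv_sym | exact ty_eqv_trans]. Qed.

#[export] Instance mty_eqv_Equivalence : Equivalence mty_eqv.
Proof.
  split.
  - intro l. exists l. split; auto using tys_eqv_refl.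
  - intros a b (x & Hx & Hp).
    destruct (tys_eqv_perm _ _ _ (Permutation_sym Hp) (proj2 ty_tys_eqv_sym _ _ Hx))
      as (y & Hy & Hpy).
    exists y. auto.
  - intros a b c (x & Hx & Hpx) (y & Hy & Hpy).
    destruct (tys_eqv_perm _ _ _ Hpx Hy) as (z & Hz & Hpz).
    exists z. split; [eapply ty_tys_eqv_trans | eapply perm_trans]; eauto.
Qed.

#[export] Instance Permutation_mty_eqv : subrelation (@Permutation ltype) mty_eqv.
Proof. intros l l' Hp. exists l. split; auto using tys_eqv_refl. Qed.

Lemma tys_eqv_app a b c d : tys_eqv a b -> tys_eqv c d -> tys_eqv (a ++ c) (b ++ d).
Proof. induction 1; simpl; auto using tys_eqv_cons. Qed.

#[export] Instance app_mty_eqv : Proper (mty_eqv ==> mty_eqv ==> mty_eqv) (@app ltype).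
Proof.
  intros a b (x & Hx & Hpx) c d (y & Hy & Hpy).
  exists (x ++ y). split; auto using tys_eqv_app, Permutation_app.
Qed.

Lemma mty_eqv_cons a b l l' : ty_eqv a b -> mty_eqv l l' -> mty_eqv (a :: l) (b :: l').
Proof. intros H (x & Hx & Hp). exists (b :: x). split; constructor; auto. Qed.

Lemma mty_eqv_nil_l l : mty_eqv [] l -> l = [].
Proof. intros (x & Hx & Hp). inversion Hx; subst. apply Permutation_nil; auto. Qed.

Lemma mty_eqv_nil_r l : mty_eqv l [] -> l = [].
Proof. intro H. apply mty_eqv_nil_l. symmetry. exact H. Qed.

Lemma mty_eqv_singleton_l a l : mty_eqv [a] l -> exists b, l = [b] /\ ty_eqv a b.
Proof.
  intros (x & Hx & Hp). inversion Hx; subst. inversion H3; subst.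
  apply Permutation_length_1_inv in Hp. subst. eauto.
Qed.

Lemma mty_eqv_snoc_n_not_nil M M' : mty_eqv (M ++ [Tn]) M' -> M' <> [].
Proof. intros H ->. apply mty_eqv_nil_r in H. destruct M; discriminate. Qed.

Lemma ty_eqv_arr_mty M M' L L' : mty_eqv M M' -> ty_eqv L L' -> ty_eqv (Arr M L) (Arr M' L').
Proof. intros (x & Hx & Hp) HL. econstructor; eauto. Qed.

Lemma ty_eqv_arr_inv M L X :
  ty_eqv (Arr M L) X -> exists M' L', X = Arr M' L' /\ mty_eqv M M' /\ ty_eqv L L'.
Proof. intro H. inversion H; subst. exists M', L'. repeat split; auto. exists M1; auto. Qed.

Lemma ty_eqv_n_l X : ty_eqv Tn X -> X = Tn.
Proof. intro H. inversion H; auto. Qed.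

Scheme ltype_eq_mut := Induction for ltype_eq Sort Prop
  with mtype_eq_mut := Induction for mtype_eq Sort Prop.
Combined Scheme ltype_mtype_eq_ind from ltype_eq_mut, mtype_eq_mut.

Lemma ltype_mtype_eq_eqv :
  (forall a b, ltype_eq a b -> ty_eqv a b) /\ (forall l l', mtype_eq l l' -> mty_eqv l l').
Proof.
  apply ltype_mtype_eq_ind; intros.
  - constructor.
  - apply ty_eqv_arr_mty; auto.
  - reflexivity.
  - rewrite <- Permutation_middle. apply mty_eqv_cons; auto.
Qed.

Lemma perm_pick_here (x r : list ltype) : Permutation (x ++ r) (x ++ r).
Proof. reflexivity. Qed.

Lemma perm_pick_last (x : list ltype) : Permutation x (x ++ []).
Proof. rewrite app_nil_r. reflexivity. Qed.

Lemma perm_pick_there (a r x r' : list ltype) :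
  Permutation r (x ++ r') -> Permutation (a ++ r) (x ++ a ++ r').
Proof. intro H. rewrite H, !app_assoc. apply Permutation_app_tail, Permutation_app_comm. Qed.

Lemma perm_cancel_step (x r R R' : list ltype) :
  Permutation R (x ++ R') -> Permutation r R' -> Permutation (x ++ r) R.
Proof. intros H1 H2. rewrite H1, H2. reflexivity. Qed.

Lemma perm_cancel_last (x R : list ltype) : Permutation R (x ++ []) -> Permutation x R.
Proof. rewrite app_nil_r. intro H. symmetry. exact H. Qed.

(* Both sides are right-associated; each block of the left side is then
   located in the right side and cancelled. *)
Ltac perm_pick :=
  first [ apply perm_pick_here | apply perm_pick_last | apply perm_pick_there; perm_pick ].
Ltac perm_solve :=
  repeat rewrite <- app_assoc; rewrite ?app_nil_r, ?app_nil_l;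
  first [ reflexivity
        | eapply perm_cancel_step; [perm_pick | perm_solve]
        | apply perm_cancel_last; perm_pick ].
Ltac mty_perm := apply Permutation_mty_eqv; perm_solve.

Definition ctx_eqv (G G' : ctx) : Prop := forall y, mty_eqv (G y) (G' y).

(* the context of [lift k c t] when [t] is typed in [G] *)
Definition ctx_shift (k c : nat) (G : ctx) : ctx :=
  fun y => if y <? c then G y else if y <? c + k then [] else G (y - k).

(* the context of a frame typed in [G1] whose hole, under [d] binders,
   holds a term typed in [G2] *)
Definition ctx_plug (d : nat) (G1 G2 : ctx) : ctx := fun y => G1 y ++ G2 (y + d).

#[export] Instance ctx_eqv_Equivalence : Equivalence ctx_eqv.
Proof.
  split.
  - intros G y. reflexivity.
  - intros G G' H y. symmetry. apply H.
  - intros G1 G2 G3 H1 H2 y. rewrite (H1 y). apply H2.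
Qed.

#[export] Instance ctx_union_eqv : Proper (ctx_eqv ==> ctx_eqv ==> ctx_eqv) ctx_union.
Proof. intros A A' HA B B' HB y. unfold ctx_union. rewrite (HA y), (HB y). reflexivity. Qed.

#[export] Instance ctx_tail_eqv : Proper (ctx_eqv ==> ctx_eqv) ctx_tail.
Proof. intros G G' H y. apply H. Qed.

#[export] Instance ctx_shift_eqv k c : Proper (ctx_eqv ==> ctx_eqv) (ctx_shift k c).
Proof.
  intros G G' H y. unfold ctx_shift.
  destruct (y <? c); [|destruct (y <? c + k)]; auto. reflexivity.
Qed.

#[export] Instance ctx_plug_eqv d : Proper (ctx_eqv ==> ctx_eqv ==> ctx_eqv) (ctx_plug d).
Proof. intros A A' HA B B' HB y. unfold ctx_plug. rewrite (HA y), (HB (y + d)). reflexivity. Qed.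

Lemma ctx_eqv_of_eq G G' : (forall y, G y = G' y) -> ctx_eqv G G'.
Proof. intros H y. rewrite H. reflexivity. Qed.

Lemma ctx_eqv_empty G : ctx_eqv G ctx_empty -> forall y, G y = [].
Proof. intros H y. apply mty_eqv_nil_r, H. Qed.

Ltac nat_cases :=
  repeat match goal with
  | |- context [?a <? ?b] => destruct (Nat.ltb_spec a b)
  | |- context [?a =? ?b] => destruct (Nat.eqb_spec a b)
  | |- context [?a <=? ?b] => destruct (Nat.leb_spec a b)
  end; try lia; try reflexivity; try (repeat f_equal; lia).

Ltac ctx_pointwise :=
  apply ctx_eqv_of_eq; let y := fresh "y" in intro y;
  unfold ctx_plug, ctx_shift, ctx_single, ctx_union, ctx_tail, ctx_empty;
  cbn [depthW depthS] in *;
  rewrite ?app_nil_l, ?app_nil_r; nat_cases.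

Inductive styped : ctx -> tm -> ltype -> nat -> nat -> nat -> Prop :=
| sty_ax : forall x L, styped (ctx_single x L) (Var x) L 0 1 1
| sty_axlam : forall t, styped ctx_empty (Lam t) Tn 0 0 1
| sty_lam : forall G t L m e s,
    styped G t L m e s -> styped (ctx_tail G) (Lam t) (Arr (G 0) L) m e (S s)
| sty_app : forall G D t u M L M' m e s m' e' s',
    styped G t (Arr M L) m e s -> smtyped D u M' m' e' s' -> mty_eqv (M ++ [Tn]) M' ->
    styped (ctx_union G D) (App t u) L (m + m' + 1) (e + e') (s + s' + 1)
| sty_es : forall G D t u L M' m e s m' e' s',
    styped G t L m e s -> smtyped D u M' m' e' s' -> mty_eqv (G 0 ++ [Tn]) M' ->
    styped (ctx_union (ctx_tail G) D) (ES t u) L (m + m') (e + e') (s + s' + 1)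
| sty_conv : forall G G' t L L' m e s,
    styped G t L m e s -> ctx_eqv G G' -> ty_eqv L L' -> styped G' t L' m e s
with smtyped : ctx -> tm -> mtype -> nat -> nat -> nat -> Prop :=
| smty_nil : forall t, smtyped ctx_empty t [] 0 0 0
| smty_cons : forall G D t L M m e s m' e' s',
    styped G t L m e s -> smtyped D t M m' e' s' ->
    smtyped (ctx_union G D) t (L :: M) (m + m') (e + e') (s + s')
| smty_conv : forall G G' t M m e s,
    smtyped G t M m e s -> ctx_eqv G G' -> smtyped G' t M m e s.

Scheme styped_mut := Induction for styped Sort Prop
  with smtyped_mut := Induction for smtyped Sort Prop.
Combined Scheme styped_smtyped_ind from styped_mut, smtyped_mut.

Scheme typed_mut := Induction for typed Sort Prop
  with mtyped_mut := Induction for mtyped Sort Prop.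
Combined Scheme typed_mtyped_ind from typed_mut, mtyped_mut.

Lemma typed_styped :
  (forall G t L m e, typed G t L m e -> exists s, styped G t L m e s) /\
  (forall G t M m e, mtyped G t M m e -> exists s, smtyped G t M m e s).
Proof.
  apply typed_mtyped_ind; intros;
    repeat match goal with H : exists s, _ |- _ => destruct H end;
    eexists; econstructor; eauto; apply ltype_mtype_eq_eqv; assumption.
Qed.

Lemma styped_ctx G G' t L m e s : styped G t L m e s -> ctx_eqv G G' -> styped G' t L m e s.
Proof. intros. eapply sty_conv; eauto. reflexivity. Qed.

Lemma styped_ty G t L L' m e s : styped G t L m e s -> ty_eqv L L' -> styped G t L' m e s.
Proof. intros. eapply sty_conv; eauto. reflexivity. Qed.

Lemma styped_counts G t L m e s m' e' s' :
  styped G t L m e s -> m = m' -> e = e' -> s = s' -> styped G t L m' e' s'.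
Proof. intros; subst; assumption. Qed.

Lemma smtyped_counts G t M m e s m' e' s' :
  smtyped G t M m e s -> m = m' -> e = e' -> s = s' -> smtyped G t M m' e' s'.
Proof. intros; subst; assumption. Qed.

Lemma styped_var_inv G x L m e s : styped G (Var x) L m e s ->
  m = 0 /\ e = 1 /\ s = 1 /\ mty_eqv (G x) [L] /\ forall y, y <> x -> G y = [].
Proof.
  remember (Var x) as t eqn:Ht.
  induction 1 as [| | | | | G G' t L L' m e s _ IH HG HL]; inversion Ht; subst.
  - unfold ctx_single. rewrite Nat.eqb_refl. repeat split; auto; [reflexivity|].
    intros y Hy. apply Nat.eqb_neq in Hy. rewrite Hy. reflexivity.
  - destruct IH as (-> & -> & -> & Hx & Hy); auto. repeat split; auto.
    + rewrite <- (HG x), Hx. apply mty_eqv_cons; [assumption | reflexivity].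
    + intros y Hne. apply mty_eqv_nil_l. rewrite <- (Hy y Hne). apply HG.
Qed.

Lemma styped_lam_inv G b L m e s : styped G (Lam b) L m e s ->
  (ctx_eqv G ctx_empty /\ L = Tn /\ m = 0 /\ e = 0 /\ s = 1) \/
  (exists G' L' s', styped G' b L' m e s' /\ s = S s' /\
     ctx_eqv G (ctx_tail G') /\ ty_eqv (Arr (G' 0) L') L).
Proof.
  remember (Lam b) as t eqn:Ht.
  induction 1 as [| | | | | G G' t L L' m e s _ IH HG HL]; inversion Ht; subst.
  - left. repeat split; reflexivity.
  - right. eexists _, _, _. repeat split; eauto; reflexivity.
  - destruct IH as [(HG0 & -> & -> & -> & ->) | (G0 & L0 & s0 & H0 & -> & HG0 & HL0)]; auto.
    + left. apply ty_eqv_n_l in HL as ->. repeat split. rewrite <- HG. exact HG0.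
    + right. exists G0, L0, s0. repeat split; auto.
      * rewrite <- HG. exact HG0.
      * rewrite HL0. exact HL.
Qed.

Lemma styped_app_inv G a u L m e s : styped G (App a u) L m e s ->
  exists G1 D M L1 M' m1 e1 s1 m2 e2 s2,
    styped G1 a (Arr M L1) m1 e1 s1 /\ smtyped D u M' m2 e2 s2 /\ mty_eqv (M ++ [Tn]) M' /\
    ctx_eqv G (ctx_union G1 D) /\ ty_eqv L1 L /\
    m = m1 + m2 + 1 /\ e = e1 + e2 /\ s = s1 + s2 + 1.
Proof.
  remember (App a u) as t eqn:Ht.
  induction 1 as [| | | | | G G' t L L' m e s _ IH HG HL]; inversion Ht; subst.
  - do 11 eexists. repeat split; eauto; reflexivity.
  - destruct IH
      as (G1 & D & M & L1 & M' & m1 & e1 & s1 & m2 & e2 & s2 & H1 & Hu & HM & HG1 & HL1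
          & -> & -> & ->);
      auto.
    do 11 eexists. repeat split; eauto.
    + rewrite <- HG. exact HG1.
    + rewrite HL1. exact HL.
Qed.

Lemma styped_es_inv G a u L m e s : styped G (ES a u) L m e s ->
  exists G1 D L1 M' m1 e1 s1 m2 e2 s2,
    styped G1 a L1 m1 e1 s1 /\ smtyped D u M' m2 e2 s2 /\ mty_eqv (G1 0 ++ [Tn]) M' /\
    ctx_eqv G (ctx_union (ctx_tail G1) D) /\ ty_eqv L1 L /\
    m = m1 + m2 /\ e = e1 + e2 /\ s = s1 + s2 + 1.
Proof.
  remember (ES a u) as t eqn:Ht.
  induction 1 as [| | | | | G G' t L L' m e s _ IH HG HL]; inversion Ht; subst.
  - do 10 eexists. repeat split; eauto; reflexivity.
  - destruct IH
      as (G1 & D & L1 & M' & m1 & e1 & s1 & m2 & e2 & s2 & H1 & Hu & HM & HG1 & HL1 & -> & -> & ->);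
      auto.
    do 10 eexists. repeat split; eauto.
    + rewrite <- HG. exact HG1.
    + rewrite HL1. exact HL.
Qed.

Lemma smtyped_nil_inv G t m e s : smtyped G t [] m e s ->
  ctx_eqv G ctx_empty /\ m = 0 /\ e = 0 /\ s = 0.
Proof.
  remember [] as M eqn:HM.
  induction 1 as [| | G G' t M m e s _ IH HG]; inversion HM; subst.
  - repeat split. reflexivity.
  - destruct IH as (HG0 & -> & -> & ->); auto. repeat split. rewrite <- HG. exact HG0.
Qed.

Lemma smtyped_cons_inv G t L M m e s : smtyped G t (L :: M) m e s ->
  exists G1 D m1 e1 s1 m2 e2 s2,
    styped G1 t L m1 e1 s1 /\ smtyped D t M m2 e2 s2 /\ ctx_eqv G (ctx_union G1 D) /\
    m = m1 + m2 /\ e = e1 + e2 /\ s = s1 + s2.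
Proof.
  remember (L :: M) as M0 eqn:HM.
  induction 1 as [| | G G' t M0 m e s _ IH HG]; inversion HM; subst.
  - do 8 eexists. repeat split; eauto. reflexivity.
  - destruct IH as (G1 & D & m1 & e1 & s1 & m2 & e2 & s2 & H1 & HD & HG1 & -> & -> & ->); auto.
    do 8 eexists. repeat split; eauto. rewrite <- HG. exact HG1.
Qed.

Lemma smtyped_nil G t : ctx_eqv G ctx_empty -> smtyped G t [] 0 0 0.
Proof. intro H. eapply smty_conv; [apply smty_nil | symmetry; exact H]. Qed.

Lemma smtyped_singleton G t L m e s : styped G t L m e s -> smtyped G t [L] m e s.
Proof.
  intro H. eapply smty_conv.
  - eapply smtyped_counts; [eapply smty_cons; [exact H | apply smty_nil] | lia ..].
  - ctx_pointwise.
Qed.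

Lemma smtyped_singleton_inv G t L m e s : smtyped G t [L] m e s -> styped G t L m e s.
Proof.
  intro H. apply smtyped_cons_inv in H
      as (G1 & D & m1 & e1 & s1 & m2 & e2 & s2 & H1 & HD & HG & -> & -> & ->).
  apply smtyped_nil_inv in HD as (HD & -> & -> & ->).
  eapply styped_ctx; [eapply styped_counts; [exact H1 | lia ..] |].
  rewrite HG, HD. ctx_pointwise.
Qed.

Lemma smtyped_app G1 G2 t A B m1 e1 s1 m2 e2 s2 :
  smtyped G1 t A m1 e1 s1 -> smtyped G2 t B m2 e2 s2 ->
  smtyped (ctx_union G1 G2) t (A ++ B) (m1 + m2) (e1 + e2) (s1 + s2).
Proof.
  revert G1 m1 e1 s1. induction A as [|L A IH]; intros G1 m1 e1 s1 HA HB; simpl.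
  - apply smtyped_nil_inv in HA as (HG & -> & -> & ->).
    eapply smty_conv; [exact HB |]. rewrite HG. ctx_pointwise.
  - apply smtyped_cons_inv in HA
      as (Ga & Gb & ma & ea & sa & mb & eb & sb & Ha & Hb & HG & -> & -> & ->).
    eapply smty_conv.
    + eapply smtyped_counts; [eapply smty_cons; [exact Ha | eapply IH; eauto] | lia ..].
    + rewrite HG. intro y. unfold ctx_union. mty_perm.
Qed.

Lemma smtyped_app_inv G t A B m e s : smtyped G t (A ++ B) m e s ->
  exists G1 G2 m1 e1 s1 m2 e2 s2,
    smtyped G1 t A m1 e1 s1 /\ smtyped G2 t B m2 e2 s2 /\ ctx_eqv G (ctx_union G1 G2) /\
    m = m1 + m2 /\ e = e1 + e2 /\ s = s1 + s2.
Proof.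
  revert G m e s. induction A as [|L A IH]; intros G m e s H; simpl in H.
  - exists ctx_empty, G, 0, 0, 0, m, e, s. repeat split; auto using smty_nil. ctx_pointwise.
  - apply smtyped_cons_inv in H
      as (G1 & D & m1 & e1 & s1 & m2 & e2 & s2 & H1 & HD & HG & -> & -> & ->).
    destruct (IH _ _ _ _ HD)
        as (Ga & Gb & ma & ea & sa & mb & eb & sb & Ha & Hb & HD' & -> & -> & ->).
    exists (ctx_union G1 Ga), Gb, (m1 + ma), (e1 + ea), (s1 + sa), mb, eb, sb.
    repeat split; try lia.
    + apply smty_cons; assumption.
    + assumption.
    + rewrite HG, HD'. intro y. unfold ctx_union. mty_perm.
Qed.

Lemma smtyped_tys_eqv G t M M' m e s : tys_eqv M M' -> smtyped G t M m e s -> smtyped G t M' m e s.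
Proof.
  intro HM. revert G m e s. induction HM; intros G m e s Hty; [assumption |].
  apply smtyped_cons_inv in Hty
      as (G1 & D & m1 & e1 & s1 & m2 & e2 & s2 & H1 & HD & HG & -> & -> & ->).
  eapply smty_conv; [apply smty_cons; [eapply styped_ty |]; eauto | symmetry; exact HG].
Qed.

Lemma smtyped_perm G t M M' m e s : Permutation M M' -> smtyped G t M m e s -> smtyped G t M' m e s.
Proof.
  intro HM. revert G m e s. induction HM; intros G m e s H; auto.
  - apply smtyped_cons_inv in H
      as (G1 & D & m1 & e1 & s1 & m2 & e2 & s2 & H1 & HD & HG & -> & -> & ->).
    eapply smty_conv; [apply smty_cons; eauto | symmetry; exact HG].
  - apply smtyped_cons_inv in H
      as (G1 & D & m1 & e1 & s1 & m2 & e2 & s2 & H1 & HD & HG & -> & -> & ->).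
    apply smtyped_cons_inv in HD
        as (G1' & D' & m1' & e1' & s1' & m2' & e2' & s2' & H1' & HD' & HG' & -> & -> & ->).
    eapply smty_conv.
    + eapply smtyped_counts; [apply smty_cons; [exact H1' | apply smty_cons; [exact H1
        | exact HD']] | lia ..].
    + rewrite HG, HG'. intro z. unfold ctx_union. mty_perm.
Qed.

Lemma smtyped_mty_eqv G t M M' m e s : mty_eqv M M' -> smtyped G t M m e s -> smtyped G t M' m e s.
Proof. intros (M1 & HM1 & Hp) H. eapply smtyped_perm, smtyped_tys_eqv; eauto. Qed.

Lemma smtyped_var_inv G x M m e s : smtyped G (Var x) M m e s ->
  m = 0 /\ e = length M /\ s = length M /\ mty_eqv (G x) M /\ forall y, y <> x -> G y = [].
Proof.
  revert G m e s. induction M as [|L M IH]; intros G m e s H.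
  - apply smtyped_nil_inv in H as (HG & -> & -> & ->).
    repeat split; [rewrite (ctx_eqv_empty _ HG);
        reflexivity |]. intros y _. apply ctx_eqv_empty, HG.
  - apply smtyped_cons_inv in H
      as (G1 & D & m1 & e1 & s1 & m2 & e2 & s2 & H1 & HD & HG & -> & -> & ->).
    apply styped_var_inv in H1 as (-> & -> & -> & Hx1 & Hy1).
    destruct (IH _ _ _ _ HD) as (-> & -> & -> & HxD & HyD).
    repeat split; simpl; try lia.
    + rewrite (HG x). unfold ctx_union. rewrite Hx1, HxD. reflexivity.
    + intros y Hy. apply mty_eqv_nil_r. rewrite (HG y). unfold ctx_union.
      rewrite Hy1, HyD by exact Hy. reflexivity.
Qed.

Lemma styped_smtyped_lift :
  (forall G t L m e s, styped G t L m e s ->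
     forall k c, styped (ctx_shift k c G) (lift k c t) L m e s) /\
  (forall G t M m e s, smtyped G t M m e s ->
     forall k c, smtyped (ctx_shift k c G) (lift k c t) M m e s).
Proof.
  apply styped_smtyped_ind.
  - intros x L k c. simpl. destruct (Nat.leb_spec c x); eapply styped_ctx; try apply sty_ax;
      ctx_pointwise.
  - intros t k c. eapply styped_ctx; [apply sty_axlam | ctx_pointwise].
  - intros G t L m e s _ IH k c. eapply styped_ctx; [apply (sty_lam _ _ _ _ _ _ (IH k (S c)))
      | ctx_pointwise].
  - intros G D t u M L M' m e s m' e' s' _ IHt _ IHu HM k c.
    eapply styped_ctx; [eapply sty_app; eauto | ctx_pointwise].
  - intros G D t u L M' m e s m' e' s' _ IHt _ IHu HM k c.
    eapply styped_ctx; [eapply sty_es; [apply (IHt k (S c)) | eauto | eauto] | ctx_pointwise].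
  - intros G G' t L L' m e s _ IH HG HL k c. eapply sty_conv; eauto. rewrite HG. reflexivity.
  - intros t k c. eapply smty_conv; [apply smty_nil | ctx_pointwise].
  - intros G D t L M m e s m' e' s' _ IHt _ IHM k c.
    eapply smty_conv; [apply smty_cons; eauto | ctx_pointwise].
  - intros G G' t M m e s _ IH HG k c. eapply smty_conv; eauto. rewrite HG. reflexivity.
Qed.

Lemma styped_lift G t L m e s k c :
  styped G t L m e s -> styped (ctx_shift k c G) (lift k c t) L m e s.
Proof. intro H. apply styped_smtyped_lift, H. Qed.

Lemma smtyped_lift G t M m e s k c :
  smtyped G t M m e s -> smtyped (ctx_shift k c G) (lift k c t) M m e s.
Proof. intro H. apply styped_smtyped_lift, H. Qed.

Lemma lift_inv_Lam k c t b : lift k c t = Lam b -> exists t1, t = Lam t1 /\ b = lift k (S c) t1.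
Proof. destruct t; simpl; try destruct (c <=? n); intro H; inversion H; eauto. Qed.

Lemma lift_inv_App k c t a u : lift k c t = App a u ->
  exists a1 u1, t = App a1 u1 /\ a = lift k c a1 /\ u = lift k c u1.
Proof. destruct t; simpl; try destruct (c <=? n); intro H; inversion H; eauto. Qed.

Lemma lift_inv_ES k c t a u : lift k c t = ES a u ->
  exists a1 u1, t = ES a1 u1 /\ a = lift k (S c) a1 /\ u = lift k c u1.
Proof. destruct t; simpl; try destruct (c <=? n); intro H; inversion H; eauto. Qed.

Lemma styped_smtyped_lift_inv :
  (forall G t L m e s, styped G t L m e s -> forall k c t0, t = lift k c t0 ->
     exists G0, styped G0 t0 L m e s /\ ctx_eqv G (ctx_shift k c G0)) /\
  (forall G t M m e s, smtyped G t M m e s -> forall k c t0, t = lift k c t0 ->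
     exists G0, smtyped G0 t0 M m e s /\ ctx_eqv G (ctx_shift k c G0)).
Proof.
  apply styped_smtyped_ind.
  - intros x L k c t0 Ht0. destruct t0; simpl in Ht0; try discriminate.
    exists (ctx_single n L). split; [apply sty_ax |].
    destruct (Nat.leb_spec c n); inversion Ht0; subst; ctx_pointwise.
  - intros t k c t0 Ht0. symmetry in Ht0. apply lift_inv_Lam in Ht0 as (t1 & -> & ->).
    exists ctx_empty. split; [apply sty_axlam | ctx_pointwise].
  - intros G t L m e s _ IH k c t0 Ht0.
    symmetry in Ht0. apply lift_inv_Lam in Ht0 as (t1 & -> & ->).
    destruct (IH k (S c) t1 eq_refl) as (G0 & HG0 & HG).
    exists (ctx_tail G0). split.
    + eapply styped_ty; [apply sty_lam, HG0 |].
      apply ty_eqv_arr_mty; [symmetry; apply (HG 0) | reflexivity].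
    + rewrite HG. ctx_pointwise.
  - intros G D t u M L M' m e s m' e' s' _ IHt _ IHu HM k c t0 Ht0.
    symmetry in Ht0. apply lift_inv_App in Ht0 as (a1 & u1 & -> & -> & ->).
    destruct (IHt k c a1 eq_refl) as (G1 & HG1 & HG).
    destruct (IHu k c u1 eq_refl) as (D1 & HD1 & HD).
    exists (ctx_union G1 D1). split; [eapply sty_app; eauto |].
    rewrite HG, HD. ctx_pointwise.
  - intros G D t u L M' m e s m' e' s' _ IHt _ IHu HM k c t0 Ht0.
    symmetry in Ht0. apply lift_inv_ES in Ht0 as (a1 & u1 & -> & -> & ->).
    destruct (IHt k (S c) a1 eq_refl) as (G1 & HG1 & HG).
    destruct (IHu k c u1 eq_refl) as (D1 & HD1 & HD).
    exists (ctx_union (ctx_tail G1) D1). split.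
    + eapply sty_es; eauto. rewrite <- HM, (HG 0). reflexivity.
    + rewrite HG, HD. ctx_pointwise.
  - intros G G' t L L' m e s _ IH HG' HL k c t0 Ht0.
    destruct (IH k c t0 Ht0) as (G0 & HG0 & HG).
    exists G0. split; [eapply styped_ty; eauto |]. rewrite <- HG'. exact HG.
  - intros t k c t0 Ht0. exists ctx_empty. split; [apply smty_nil | ctx_pointwise].
  - intros G D t L M m e s m' e' s' _ IHt _ IHM k c t0 Ht0.
    destruct (IHt k c t0 Ht0) as (G1 & HG1 & HG).
    destruct (IHM k c t0 Ht0) as (D1 & HD1 & HD).
    exists (ctx_union G1 D1). split; [apply smty_cons; assumption |].
    rewrite HG, HD. ctx_pointwise.
  - intros G G' t M m e s _ IH HG' k c t0 Ht0.
    destruct (IH k c t0 Ht0) as (G0 & HG0 & HG).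
    exists G0. split; [assumption |]. rewrite <- HG'. exact HG.
Qed.

Lemma styped_fillS_inv S0 G t L m e s : styped G (fillS S0 t) L m e s ->
  exists G1 G2 m1 e1 s1 m2 e2 s2,
    styped G2 t L m2 e2 s2 /\ m = m1 + m2 /\ e = e1 + e2 /\ s = s1 + s2 /\
    ctx_eqv G (ctx_plug (depthS S0) G1 G2) /\
    forall G2' t' L' m2' e2' s2', styped G2' t' L' m2' e2' s2' ->
      (forall y, y < depthS S0 -> mty_eqv (G2' y) (G2 y)) ->
      styped (ctx_plug (depthS S0) G1 G2') (fillS S0 t') L' (m1 + m2') (e1 + e2') (s1 + s2').
Proof.
  revert G t L m e s. induction S0 as [|S0 IH u]; intros G t L m e s H; simpl in *.
  - exists ctx_empty, G, 0, 0, 0, m, e, s. repeat split; auto; [ctx_pointwise |].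
    intros. eapply styped_ctx; eauto. ctx_pointwise.
  - apply styped_es_inv in H
      as (G0 & D & L0 & M' & m0 & e0 & s0 & mu & eu & su & H0 & Hu & HM & HG & HL & -> & -> & ->).
    destruct (IH _ _ _ _ _ _ H0)
      as (G1 & G2 & m1 & e1 & s1 & m2 & e2 & s2 & H2 & -> & -> & -> & HG0 & Hplug).
    exists (ctx_union (ctx_tail G1) D), G2, (m1 + mu), (e1 + eu), (s1 + su + 1), m2, e2, s2.
    repeat split; try lia.
    + eapply styped_ty; eauto.
    + rewrite HG, HG0. intro y. unfold ctx_union, ctx_tail, ctx_plug. simpl.
      rewrite <- plus_n_Sm. mty_perm.
    + intros G2' t' L' m2' e2' s2' H' Hbound.
      assert (Hbody := Hplug _ _ _ _ _ _ H' (fun y Hy => Hbound y (Nat.lt_lt_succ_r _ _ Hy))).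
      eapply styped_counts;
        [eapply styped_ctx; [eapply sty_es; [exact Hbody | exact Hu |] |] | lia ..].
      * rewrite <- HM, (HG0 0). unfold ctx_plug. simpl. rewrite Hbound by lia. reflexivity.
      * intro y. unfold ctx_union, ctx_tail, ctx_plug. simpl. rewrite <- plus_n_Sm. mty_perm.
Qed.

(* A typing of [W<t>] splits into a frame and a non-empty multi typing of [t].
   Replacements of [t] must not use the variables bound by [W]: this is what
   lets [wsplitM_cons] split their context among several typings of [W<t>]. *)
Definition wsplit (W : wctx) (t : tm) (G : ctx) (L : ltype) (m e s : nat) : Prop :=
  exists G1 G2 Mh m1 e1 s1 m2 e2 s2,
    smtyped G2 t Mh m2 e2 s2 /\ Mh <> [] /\
    m = m1 + m2 /\ e = e1 + e2 /\ s = s1 + s2 /\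
    ctx_eqv G (ctx_plug (depthW W) G1 G2) /\
    forall G2' t' m2' e2' s2', smtyped G2' t' Mh m2' e2' s2' ->
      (forall y, y < depthW W -> G2 y = []) -> (forall y, y < depthW W -> G2' y = []) ->
      styped (ctx_plug (depthW W) G1 G2') (fillW W t') L (m1 + m2') (e1 + e2') (s1 + s2').

Definition wsplitM (W : wctx) (t : tm) (G : ctx) (Ms : mtype) (m e s : nat) : Prop :=
  exists G1 G2 Mh m1 e1 s1 m2 e2 s2,
    smtyped G2 t Mh m2 e2 s2 /\ (Ms <> [] -> Mh <> []) /\
    m = m1 + m2 /\ e = e1 + e2 /\ s = s1 + s2 /\
    ctx_eqv G (ctx_plug (depthW W) G1 G2) /\
    forall G2' t' m2' e2' s2', smtyped G2' t' Mh m2' e2' s2' ->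
      (forall y, y < depthW W -> G2 y = []) -> (forall y, y < depthW W -> G2' y = []) ->
      smtyped (ctx_plug (depthW W) G1 G2') (fillW W t') Ms (m1 + m2') (e1 + e2') (s1 + s2').

Lemma wsplit_conv W t G G' L L' m e s :
  wsplit W t G L m e s -> ctx_eqv G G' -> ty_eqv L L' -> wsplit W t G' L' m e s.
Proof.
  intros (G1 & G2 & Mh & m1 & e1 & s1 & m2 & e2 & s2 & H2 & Hne & Hm & He & Hs & HG & Hplug) HG' HL.
  exists G1, G2, Mh, m1, e1, s1, m2, e2, s2. repeat split; auto.
  - rewrite <- HG'. exact HG.
  - intros. eapply styped_ty; eauto.
Qed.

Lemma wsplitM_nil W t G : ctx_eqv G ctx_empty -> wsplitM W t G [] 0 0 0.
Proof.
  intro HG. exists ctx_empty, ctx_empty, [], 0, 0, 0, 0, 0, 0.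
  repeat split; auto using smty_nil.
  intros G2' t' m2' e2' s2' H' _ _.
  apply smtyped_nil_inv in H' as (HG2' & -> & -> & ->).
  apply smtyped_nil. rewrite HG2'. ctx_pointwise.
Qed.

Lemma wsplitM_cons W t Ga Gb L Ms ma ea sa mb eb sb :
  wsplit W t Ga L ma ea sa -> wsplitM W t Gb Ms mb eb sb ->
  wsplitM W t (ctx_union Ga Gb) (L :: Ms) (ma + mb) (ea + eb) (sa + sb).
Proof.
  intros (G1a & G2a & Mha & m1a & e1a & s1a & m2a & e2a & s2a & H2a & Hnea & -> & -> & ->
          & HGa & Hpa)
         (G1b & G2b & Mhb & m1b & e1b & s1b & m2b & e2b & s2b & H2b & _ & -> & -> & -> & HGb & Hpb).
  exists (ctx_union G1a G1b), (ctx_union G2a G2b), (Mha ++ Mhb),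
    (m1a + m1b), (e1a + e1b), (s1a + s1b), (m2a + m2b), (e2a + e2b), (s2a + s2b).
  repeat split; try lia.
  - apply smtyped_app; assumption.
  - intros _. destruct Mha; [contradiction | discriminate].
  - rewrite HGa, HGb. intro y. unfold ctx_union, ctx_plug. mty_perm.
  - intros G2' t' m2' e2' s2' H' Hbound Hbound'.
    apply smtyped_app_inv in H'
        as (Ga' & Gb' & ma' & ea' & sa' & mb' & eb' & sb' & Ha' & Hb' & HG' & -> & -> & ->).
    assert (Hnil : forall y, y < depthW W -> G2a y = [] /\ G2b y = [] /\ Ga' y = [] /\ Gb' y = []).
    { intros y Hy. rewrite <- and_assoc. split; apply app_eq_nil; [apply Hbound, Hy |].
      apply mty_eqv_nil_l. rewrite <- (Hbound' y Hy). apply HG'. }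
    assert (Ha := Hpa _ _ _ _ _ Ha'). assert (Hb := Hpb _ _ _ _ _ Hb').
    eapply smtyped_counts; [eapply smty_conv; [apply smty_cons; [apply Ha | apply Hb] |] | lia ..];
      try (intros y Hy; specialize (Hnil y Hy); tauto).
    intro y. unfold ctx_union, ctx_plug. rewrite (HG' (y + depthW W)). unfold ctx_union. mty_perm.
Qed.

Lemma wsplitM_of_wsplit W t :
  (forall G L m e s, styped G (fillW W t) L m e s -> wsplit W t G L m e s) ->
  forall Ms G m e s, smtyped G (fillW W t) Ms m e s -> wsplitM W t G Ms m e s.
Proof.
  intros Hsplit Ms. induction Ms as [|L Ms IH]; intros G m e s H.
  - apply smtyped_nil_inv in H as (HG & -> & -> & ->). apply wsplitM_nil, HG.
  - apply smtyped_cons_inv in H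
      as (Ga & Gb & ma & ea & sa & mb & eb & sb & Ha & Hb & HG & -> & -> & ->).
    destruct (wsplitM_cons _ _ _ _ _ _ _ _ _ _ _ _ (Hsplit _ _ _ _ _ Ha) (IH _ _ _ _ Hb))
      as (G1 & G2 & Mh & m1 & e1 & s1 & m2 & e2 & s2 & H2 & Hne & Hm & He & Hs & HG' & Hplug).
    exists G1, G2, Mh, m1, e1, s1, m2, e2, s2. repeat split; auto. rewrite HG. exact HG'.
Qed.

Lemma wsplit_hole t G L m e s : styped G t L m e s -> wsplit WHole t G L m e s.
Proof.
  intro H. exists ctx_empty, G, [L], 0, 0, 0, m, e, s.
  repeat split; auto using smtyped_singleton; [discriminate | ctx_pointwise |].
  intros G2' t' m2' e2' s2' H' _ _. apply smtyped_singleton_inv in H'.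
  eapply styped_ctx; [exact H' | ctx_pointwise].
Qed.

Lemma wsplit_app_l W t u G D M L M' m e s m' e' s' :
  wsplit W t G (Arr M L) m e s -> smtyped D u M' m' e' s' -> mty_eqv (M ++ [Tn]) M' ->
  wsplit (WAppL W u) t (ctx_union G D) L (m + m' + 1) (e + e') (s + s' + 1).
Proof.
  intros (G1 & G2 & Mh & m1 & e1 & s1 & m2 & e2 & s2 & H2 & Hne & -> & -> & -> & HG & Hplug) Hu HM.
  exists (ctx_union G1 D), G2, Mh, (m1 + m' + 1), (e1 + e'), (s1 + s' + 1), m2, e2, s2.
  repeat split; auto; try lia.
  - rewrite HG. intro y. unfold ctx_union, ctx_plug. mty_perm.
  - intros G2' t' m2' e2' s2' H' Hb Hb'.
    assert (Ht := Hplug _ _ _ _ _ H' Hb Hb').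
    eapply styped_counts; [eapply styped_ctx;
        [exact (sty_app _ _ _ _ _ _ _ _ _ _ _ _ _ Ht Hu HM) |] | lia ..].
    intro y. unfold ctx_union, ctx_plug. mty_perm.
Qed.

Lemma wsplit_app_r W t a G D M L M' m e s m' e' s' :
  styped G a (Arr M L) m e s -> wsplitM W t D M' m' e' s' -> mty_eqv (M ++ [Tn]) M' ->
  wsplit (WAppR a W) t (ctx_union G D) L (m + m' + 1) (e + e') (s + s' + 1).
Proof.
  intros Ha (G1 & G2 & Mh & m1 & e1 & s1 & m2 & e2 & s2 & H2 & Hne & -> & -> & -> & HD & Hplug) HM.
  exists (ctx_union G G1), G2, Mh, (m + m1 + 1), (e + e1), (s + s1 + 1), m2, e2, s2.
  repeat split; auto; try lia.
  - apply Hne, (mty_eqv_snoc_n_not_nil _ _ HM).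
  - rewrite HD. intro y. unfold ctx_union, ctx_plug. mty_perm.
  - intros G2' t' m2' e2' s2' H' Hb Hb'.
    assert (Hu := Hplug _ _ _ _ _ H' Hb Hb').
    eapply styped_counts; [eapply styped_ctx;
        [exact (sty_app _ _ _ _ _ _ _ _ _ _ _ _ _ Ha Hu HM) |] | lia ..].
    intro y. unfold ctx_union, ctx_plug. mty_perm.
Qed.

Lemma wsplit_es_arg W t a G D L M' m e s m' e' s' :
  styped G a L m e s -> wsplitM W t D M' m' e' s' -> mty_eqv (G 0 ++ [Tn]) M' ->
  wsplit (WESArg a W) t (ctx_union (ctx_tail G) D) L (m + m') (e + e') (s + s' + 1).
Proof.
  intros Ha (G1 & G2 & Mh & m1 & e1 & s1 & m2 & e2 & s2 & H2 & Hne & -> & -> & -> & HD & Hplug) HM.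
  exists (ctx_union (ctx_tail G) G1), G2, Mh, (m + m1), (e + e1), (s + s1 + 1), m2, e2, s2.
  repeat split; auto; try lia.
  - apply Hne, (mty_eqv_snoc_n_not_nil _ _ HM).
  - rewrite HD. intro y. unfold ctx_union, ctx_plug. mty_perm.
  - intros G2' t' m2' e2' s2' H' Hb Hb'.
    assert (Hu := Hplug _ _ _ _ _ H' Hb Hb').
    eapply styped_counts; [eapply styped_ctx;
        [exact (sty_es _ _ _ _ _ _ _ _ _ _ _ _ Ha Hu HM) |] | lia ..].
    intro y. unfold ctx_union, ctx_plug. mty_perm.
Qed.

Lemma wsplit_es_body W t u G D L M' m e s m' e' s' :
  wsplit W t G L m e s -> smtyped D u M' m' e' s' -> mty_eqv (G 0 ++ [Tn]) M' ->
  wsplit (WESBody W u) t (ctx_union (ctx_tail G) D) L (m + m') (e + e') (s + s' + 1).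
Proof.
  intros (G1 & G2 & Mh & m1 & e1 & s1 & m2 & e2 & s2 & H2 & Hne & -> & -> & -> & HG & Hplug) Hu HM.
  exists (ctx_union (ctx_tail G1) D), G2, Mh, (m1 + m'), (e1 + e'), (s1 + s' + 1), m2, e2, s2.
  repeat split; auto; try lia.
  - rewrite HG. intro y. unfold ctx_union, ctx_tail, ctx_plug. simpl. rewrite <- plus_n_Sm.
      mty_perm.
  - simpl. intros G2' t' m2' e2' s2' H' Hb Hb'.
    assert (Ht := Hplug _ _ _ _ _ H' 
                   (fun y Hy => Hb y (Nat.lt_lt_succ_r _ _ Hy)) (fun y Hy => Hb' y
                       (Nat.lt_lt_succ_r _ _ Hy))).
    assert (HM' : mty_eqv (ctx_plug (depthW W) G1 G2' 0 ++ [Tn]) M').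
    { rewrite <- HM, (HG 0). unfold ctx_plug. simpl. rewrite Hb, Hb' by lia. reflexivity. }
    eapply styped_counts; [eapply styped_ctx;
        [exact (sty_es _ _ _ _ _ _ _ _ _ _ _ _ Ht Hu HM') |] | lia ..].
    intro y. unfold ctx_union, ctx_tail, ctx_plug. simpl. rewrite <- plus_n_Sm. mty_perm.
Qed.

Lemma styped_fillW_split W t G L m e s : styped G (fillW W t) L m e s -> wsplit W t G L m e s.
Proof.
  revert G L m e s.
  induction W as [| W IH u | a W IH | a W IH | W IH u]; intros G L m e s H; simpl in H.
  - apply wsplit_hole, H.
  - apply styped_app_inv in H
      as (G1 & D & M & L1 & M' & m1 & e1 & s1 & m2 & e2 & s2 & H1 & Hu & HM & HG & HL
          & -> & -> & ->).
    eapply wsplit_conv; [eapply wsplit_app_l; eauto | symmetry; exact HG | exact HL].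
  - apply styped_app_inv in H
      as (G1 & D & M & L1 & M' & m1 & e1 & s1 & m2 & e2 & s2 & H1 & Hu & HM & HG & HL
          & -> & -> & ->).
    eapply wsplit_conv; [eapply wsplit_app_r; eauto using wsplitM_of_wsplit
        | symmetry; exact HG | exact HL].
  - apply styped_es_inv in H
      as (G1 & D & L1 & M' & m1 & e1 & s1 & m2 & e2 & s2 & H1 & Hu & HM & HG & HL & -> & -> & ->).
    eapply wsplit_conv; [eapply wsplit_es_arg; eauto using wsplitM_of_wsplit
        | symmetry; exact HG | exact HL].
  - apply styped_es_inv in H
      as (G1 & D & L1 & M' & m1 & e1 & s1 & m2 & e2 & s2 & H1 & Hu & HM & HG & HL & -> & -> & ->).
    eapply wsplit_conv; [eapply wsplit_es_body; eauto | symmetry; exact HG | exact HL].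
Qed.

Definition counts_drop (k : kind) (m e s m' e' s' : nat) : Prop :=
  s' < s /\ m' <= m /\ e' <= e /\ (k = Km -> m' < m) /\ (k = Ke -> e' < e).

Ltac solve_counts_drop := unfold counts_drop; repeat split; intros; try discriminate; lia.

Definition typing_decreases (k : kind) (a b : tm) : Prop :=
  forall G L m e s, styped G a L m e s ->
  exists G' m' e' s', styped G' b L m' e' s' /\ ctx_eqv G G' /\ counts_drop k m e s m' e' s'.

Lemma root_m_decreases S0 t u :
  typing_decreases Km (App (fillS S0 (Lam t)) u) (fillS S0 (ES t (lift (depthS S0) 0 u))).
Proof.
  intros G L m e s H.
  apply styped_app_inv in H
      as (G1 & D & M & L1 & M' & m1 & e1 & s1 & mu & eu & su & H1 & Hu & HM & HG & HL
          & -> & -> & ->).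
  apply styped_fillS_inv in H1
      as (Gs & G2 & ms & es & ss & m2 & e2 & s2 & H2 & -> & -> & -> & HG1 & Hplug).
  apply styped_lam_inv in H2 as [(_ & [=] & _) | (G3 & L3 & s3 & H3 & -> & HG2 & HL3)].
  apply ty_eqv_arr_inv in HL3 as (M0 & L4 & [= <- <-] & HG3 & HL3).
  set (d := depthS S0) in *.
  assert (Hes : styped (ctx_union (ctx_tail G3) (ctx_shift d 0 D)) (ES t (lift d 0 u)) L3
                  (m2 + mu) (e2 + eu) (s3 + su + 1)).
  { eapply sty_es; [exact H3 | apply smtyped_lift, Hu | rewrite HG3; exact HM]. }
  assert (Hbound : forall y, y < d -> mty_eqv (ctx_union (ctx_tail G3) (ctx_shift d 0 D) y) (G2 y)).
  { intros y Hy. rewrite (HG2 y). unfold ctx_union, ctx_shift. nat_cases. rewrite app_nil_r.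
      reflexivity. }
  eexists _, _, _, _. split; [eapply styped_ty; [exact (Hplug _ _ _ _ _ _ Hes Hbound)
      | rewrite HL3; exact HL] |].
  split.
  - rewrite HG, HG1, HG2. intro y. unfold ctx_union, ctx_plug, ctx_tail, ctx_shift. nat_cases.
    replace (y + d - d) with y by lia. mty_perm.
  - solve_counts_drop.
Qed.

Lemma root_e_decreases W u :
  typing_decreases Ke (ES (fillWc W (Var 0)) u) (ES (fillWc W (lift 1 0 u)) u).
Proof.
  intros G L m e s H. unfold fillWc in *. simpl in *.
  apply styped_es_inv in H
      as (G0 & D & L0 & M' & m0 & e0 & s0 & mu & eu & su & H0 & Hu & HM & HG & HL & -> & -> & ->).
  apply styped_fillW_split in H0
      as (G1 & G2 & Mh & m1 & e1 & s1 & m2 & e2 & s2 & Hx & Hne & -> & -> & -> & HG0 & Hplug).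
  set (d := depthW W) in *.
  apply smtyped_var_inv in Hx as (-> & -> & -> & HG2d & HG2).
  (* the occurrence consumes the part [Mh] of the multi type of [u] *)
  assert (HM' : mty_eqv M' (Mh ++ (G1 0 ++ [Tn]))).
  { rewrite <- HM, (HG0 0), <- HG2d. unfold ctx_plug. simpl. mty_perm. }
  apply (smtyped_mty_eqv _ _ _ _ _ _ _ HM'), smtyped_app_inv in Hu
    as (Da & Db & ma & ea & sa & mb & eb & sb & Ha & Hb & HD & -> & -> & ->).
  set (Da' := ctx_shift d 0 (ctx_shift 1 0 Da)).
  assert (Hu' : smtyped Da' (lift d 0 (lift 1 0 u)) Mh ma ea sa).
  { apply smtyped_lift, smtyped_lift, Ha. }
  assert (HDa' : forall y, y < d -> Da' y = []).
  { intros y Hy. unfold Da', ctx_shift. nat_cases. }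
  assert (HG2' : forall y, y < d -> G2 y = []).
  { intros y Hy. apply HG2. lia. }
  assert (Hbody := Hplug _ _ _ _ _ Hu' HG2' HDa').
  eexists _, _, _, _. split; [eapply sty_conv; [eapply sty_es; [exact Hbody | exact Hb |]
      | reflexivity | exact HL] |].
  - unfold ctx_plug, Da', ctx_shift. nat_cases. rewrite app_nil_r. reflexivity.
  - split.
    + rewrite HG, HG0, HD. intro y. unfold ctx_union, ctx_tail, ctx_plug, Da', ctx_shift.
      rewrite (HG2 (S y + d)) by lia. nat_cases. replace (S y + d - d - 1) with y by lia. mty_perm.
    + destruct Mh; [contradiction |]. simpl. solve_counts_drop.
Qed.

Lemma root_gcv_decreases S0 t v :
  typing_decreases Kgcv (ES (lift 1 0 t) (fillS S0 (Lam v))) (fillS S0 (lift (depthS S0) 0 t)).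
Proof.
  intros G L m e s H.
  apply styped_es_inv in H
      as (G0 & D & L0 & M' & m0 & e0 & s0 & mu & eu & su & H0 & Hu & HM & HG & HL & -> & -> & ->).
  destruct (proj1 styped_smtyped_lift_inv _ _ _ _ _ _ H0 1 0 t eq_refl) as (G0' & Ht & HG0).
  assert (HM' : mty_eqv [Tn] M').
  { rewrite <- HM, (HG0 0). reflexivity. }
  apply mty_eqv_singleton_l in HM' as (b & -> & Hb). apply ty_eqv_n_l in Hb as ->.
  apply smtyped_singleton_inv, styped_fillS_inv in Hu
    as (Gs & G2 & ms & es & ss & m2 & e2 & s2 & Hv & -> & -> & -> & HD & Hplug).
  apply styped_lam_inv in Hv as [(HG2 & _ & -> & -> & ->) | (G3 & L3 & s3 & _ & _ & _ & HL3)].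
  2:{ apply ty_eqv_arr_inv in HL3 as (? & ? & [=] & _). }
  set (d := depthS S0) in *.
  assert (Hbound : forall y, y < d -> mty_eqv (ctx_shift d 0 G0' y) (G2 y)).
  { intros y Hy. rewrite (ctx_eqv_empty _ HG2 y). unfold ctx_shift. nat_cases. }
  eexists _, _, _, _.
  split; [eapply styped_ty; [exact (Hplug _ _ _ _ _ _ (styped_lift _ _ _ _ _ _ d 0 Ht) Hbound)
      | exact HL] |].
  split.
  - rewrite HG, HG0, HD. intro y. unfold ctx_union, ctx_tail, ctx_plug, ctx_shift.
    rewrite (ctx_eqv_empty _ HG2). nat_cases. replace (S y - 1) with y by lia.
    replace (y + d - d) with y by lia. mty_perm.
  - solve_counts_drop.
Qed.

Lemma root_decreases k r r' : root k r r' -> typing_decreases k r r'.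
Proof.
  destruct 1; [apply root_m_decreases | apply root_e_decreases | apply root_gcv_decreases].
Qed.

Definition mtyping_decreases (k : kind) (a b : tm) : Prop :=
  forall G M m e s, smtyped G a M m e s ->
  exists G' m' e' s', smtyped G' b M m' e' s' /\ ctx_eqv G G' /\
    s' <= s /\ m' <= m /\ e' <= e /\ (M <> [] -> counts_drop k m e s m' e' s').

Lemma mtyping_decreases_of_typing k a b : typing_decreases k a b -> mtyping_decreases k a b.
Proof.
  intros Hdec G M. revert G. induction M as [|L M IH]; intros G m e s H.
  - apply smtyped_nil_inv in H as (HG & -> & -> & ->).
    exists G, 0, 0, 0. repeat split; auto using smtyped_nil; try reflexivity; contradiction.
  - apply smtyped_cons_inv in H
      as (Ga & Gb & ma & ea & sa & mb & eb & sb & Ha & Hb & HG & -> & -> & ->).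
    destruct (Hdec _ _ _ _ _ Ha) as (Ga' & ma' & ea' & sa' & Ha' & HGa & Hda).
    destruct (IH _ _ _ _ Hb) as (Gb' & mb' & eb' & sb' & Hb' & HGb & ? & ? & ? & _).
    exists (ctx_union Ga' Gb'), (ma' + mb'), (ea' + eb'), (sa' + sb').
    split; [apply smty_cons; assumption |]. split; [rewrite HG, HGa, HGb; reflexivity |].
    unfold counts_drop in *. intuition lia.
Qed.

Lemma typing_decreases_app_l k a a' u :
  typing_decreases k a a' -> typing_decreases k (App a u) (App a' u).
Proof.
  intros Hdec G L m e s H.
  apply styped_app_inv in H
      as (G1 & D & M & L1 & M' & m1 & e1 & s1 & m2 & e2 & s2 & H1 & Hu & HM & HG & HL
          & -> & -> & ->).
  destruct (Hdec _ _ _ _ _ H1) as (G1' & m1' & e1' & s1' & H1' & HG1 & Hd).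
  eexists _, _, _, _. split; [eapply styped_ty; [eapply sty_app; eauto | exact HL] |].
  split; [rewrite HG, HG1; reflexivity |]. unfold counts_drop in *. intuition lia.
Qed.

Lemma typing_decreases_app_r k a u u' :
  mtyping_decreases k u u' -> typing_decreases k (App a u) (App a u').
Proof.
  intros Hdec G L m e s H.
  apply styped_app_inv in H
      as (G1 & D & M & L1 & M' & m1 & e1 & s1 & m2 & e2 & s2 & H1 & Hu & HM & HG & HL
          & -> & -> & ->).
  destruct (Hdec _ _ _ _ _ Hu) as (D' & m2' & e2' & s2' & Hu' & HD & ? & ? & ? & Hd).
  specialize (Hd (mty_eqv_snoc_n_not_nil _ _ HM)).
  eexists _, _, _, _. split; [eapply styped_ty; [eapply sty_app; eauto | exact HL] |].
  split; [rewrite HG, HD; reflexivity |]. unfold counts_drop in *. intuition lia.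
Qed.

Lemma typing_decreases_es_arg k a u u' :
  mtyping_decreases k u u' -> typing_decreases k (ES a u) (ES a u').
Proof.
  intros Hdec G L m e s H.
  apply styped_es_inv in H
      as (G1 & D & L1 & M' & m1 & e1 & s1 & m2 & e2 & s2 & H1 & Hu & HM & HG & HL & -> & -> & ->).
  destruct (Hdec _ _ _ _ _ Hu) as (D' & m2' & e2' & s2' & Hu' & HD & ? & ? & ? & Hd).
  specialize (Hd (mty_eqv_snoc_n_not_nil _ _ HM)).
  eexists _, _, _, _. split; [eapply styped_ty; [eapply sty_es; eauto | exact HL] |].
  split; [rewrite HG, HD; reflexivity |]. unfold counts_drop in *. intuition lia.
Qed.

Lemma typing_decreases_es_body k a a' u :
  typing_decreases k a a' -> typing_decreases k (ES a u) (ES a' u).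
Proof.
  intros Hdec G L m e s H.
  apply styped_es_inv in H
      as (G1 & D & L1 & M' & m1 & e1 & s1 & m2 & e2 & s2 & H1 & Hu & HM & HG & HL & -> & -> & ->).
  destruct (Hdec _ _ _ _ _ H1) as (G1' & m1' & e1' & s1' & H1' & HG1 & Hd).
  eexists _, _, _, _.
  split; [eapply styped_ty; [eapply sty_es; [exact H1' | exact Hu
      | rewrite <- (HG1 0); exact HM] | exact HL] |].
  split; [rewrite HG, HG1; reflexivity |]. unfold counts_drop in *. intuition lia.
Qed.

Lemma wstep_decreases k t t' : wstep k t t' -> typing_decreases k t t'.
Proof.
  intros (W & r & r' & Hr & -> & ->).
  induction W; simpl;
    auto using root_decreases, typing_decreases_app_l, typing_decreases_app_r,
      typing_decreases_es_arg, typing_decreases_es_body, mtyping_decreases_of_typing.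
Qed.

Lemma styped_wSN G t L m e s : styped G t L m e s -> wSN t.
Proof.
  revert G t L m e. induction s as [s IH] using lt_wf_ind. intros G t L m e H (f & Hf0 & Hf).
  destruct (Hf 0) as (k & Hk). rewrite Hf0 in Hk.
  destruct (wstep_decreases _ _ _ Hk _ _ _ _ _ H) as (G' & m' & e' & s' & H' & _ & Hlt & _).
  apply (IH s' Hlt _ _ _ _ _ H'). exists (fun i => f (S i)). auto.
Qed.

Lemma styped_redseq_counts t ks n : redseq t ks n ->
  forall G L m e s, styped G t L m e s -> count_kind Km ks <= m /\ count_kind Ke ks <= e.
Proof.
  unfold count_kind. induction 1 as [| k t t' ks u Hstep _ IH]; intros G L m e s H; simpl; [lia |].
  destruct (wstep_decreases _ _ _ Hstep _ _ _ _ _ H)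
      as (G' & m' & e' & s' & H' & _ & _ & ? & ? & Hm & He).
  destruct (IH _ _ _ _ _ H'). destruct k; simpl; [specialize (Hm eq_refl)
      | specialize (He eq_refl) |]; lia.
Qed.

Theorem theorem6p2 :
  forall (G : ctx) (t : tm) (L : ltype) (m e : nat),
    typed G t L m e ->
    wSN t /\
    (forall (ks : list kind) (n : tm),
        redseq t ks n -> wnormal n ->
        count_kind Km ks <= m /\ count_kind Ke ks <= e).
Proof.
  intros G t L m e Hty. destruct (proj1 typed_styped _ _ _ _ _ Hty) as (s & H).
  split; [exact (styped_wSN _ _ _ _ _ _ H) |].
  intros ks n Hred _. exact (styped_redseq_counts _ _ _ Hred _ _ _ _ _ H).
Qed.
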